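(* Assume the defocusing case $\mu_1\le\dots\le\mu_n<0$ (with $n\ge3$). Then there are at most finitely many possible bifurcation parameters, i.e. the set of $\beta\in(-\infty,\mu_1)\cup(\mu_n,\bar\beta)$ such that $f(\beta)=\lambda_k$ for some $k\in\mathbb N$ is finite.
   Context: Let $\Omega\subset\mathbb R^N$ ($N\le3$) be a smooth bounded domain whose principal Dirichlet eigenvalue of $-\Delta$ is less than $1$, and $\omega\in H_0^1(\Omega)$ the unique positive solution of $-\Delta\omega-\omega=-\omega^3$. Let $-1=\lambda_1<\lambda_2<\cdots\to\infty$ be the distinct eigenvalues of $-\Delta\psi-\psi=\lambda\omega^2\psi$, $\psi\in H_0^1(\Omega)$. Let $g(\beta)=1+\beta\sum_{j=1}^n\frac1{\mu_j-\beta}$, $f(\beta)=-1-\frac2{g(\beta)}$, and $\bar\beta$ the unique zero of $g$ in $(\mu_n,\infty)$. *)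

From HB Require Import structures.
From mathcomp Require Import all_boot all_order all_algebra.
From mathcomp Require Import all_classical all_reals all_analysis.
Set Implicit Arguments. Unset Strict Implicit. Unset Printing Implicit Defensive.
Import Order.TTheory GRing.Theory Num.Theory.
Local Open Scope ring_scope.

(* mu_1,...,mu_n are mu 1, ..., mu n (mu : nat -> R). *)

Definition bif_g (R : realType) (n : nat) (mu : nat -> R) (b : R) : R :=
  1 + b * \sum_(1 <= j < n.+1) (mu j - b)^-1.

Definition bif_f (R : realType) (n : nat) (mu : nat -> R) (b : R) : R :=
  -1 - 2 / bif_g n mu b.

From HB Require Import structures.
From mathcomp Require Import all_boot all_order all_algebra.
From mathcomp Require Import all_classical all_reals all_analysis.
From mathcomp Require Import ring lra.
Import Order.TTheory GRing.Theory Num.Theory.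
Local Open Scope ring_scope.
Local Open Scope classical_set_scope.

(* Every term b / (mu_j - b) of g is strictly decreasing in b on either side
   of mu_j < 0, so g is strictly decreasing on (-oo, mu_1) and on (mu_n, +oo).
   On (mu_n, bbar) this gives g > g(bbar) = 0, hence f < -1 <= lam_k.  On
   (-oo, mu_1) each term is below -1, so g < 1 - n <= -2 and f < 0; since
   lam_k -> +oo only finitely many lam_k are negative, and f, being injective
   there, takes each of them at most once. *)

Lemma finite_subset1 (T : Type) (A : set T) : is_subset1 A -> finite_set A.
Proof.
move=> A1; have [->|/set0P [x Ax]] := eqVneq A set0; first exact: finite_set0.
by apply: (sub_finite_set _ (finite_set1 x)) => y Ay; rewrite /= (A1 _ _ Ay Ax).
Qed.

Lemma ge_seq_first (R : realType) (u : nat -> R) :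
  (forall k, (1 <= k)%N -> u k <= u k.+1) -> forall k, (1 <= k)%N -> u 1%N <= u k.
Proof.
move=> u_incr [//|k] _; elim: k => [//|k IHk].
exact: le_trans IHk (u_incr k.+1 isT).
Qed.

Lemma lt_div_sub (R : realFieldType) (m b c : R) : m < 0 -> b < c ->
  0 < (m - b) * (m - c) -> c / (m - c) < b / (m - b).
Proof.
move=> m_lt0 lt_bc pos_prod.
have mb_neq0 : m - b != 0 by apply: contraTneq pos_prod => ->; rewrite mul0r ltxx.
have mc_neq0 : m - c != 0 by apply: contraTneq pos_prod => ->; rewrite mulr0 ltxx.
rewrite (_ : c / (m - c) = c * (m - b) / ((m - b) * (m - c))); last first.
  by field; rewrite mb_neq0 mc_neq0.
rewrite (_ : b / (m - b) = b * (m - c) / ((m - b) * (m - c))); last first.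
  by field; rewrite mb_neq0 mc_neq0.
rewrite ltr_pM2r ?invr_gt0 //; nra.
Qed.

Section BifurcationFunctions.
Context {R : realType} {n : nat} {mu : nat -> R}.

Lemma bif_gE (b : R) : bif_g n mu b = 1 + \sum_(1 <= j < n.+1) b / (mu j - b).
Proof. by rewrite /bif_g mulr_sumr. Qed.

Lemma bif_f_inj_g (b c : R) :
  bif_f n mu b = bif_f n mu c -> bif_g n mu b = bif_g n mu c.
Proof. by rewrite /bif_f => f_eq; apply: invr_inj; lra. Qed.

Lemma bif_f_lt0 (b : R) : bif_g n mu b < -2 -> bif_f n mu b < 0.
Proof.
move=> g_lt; have : -1 < 2 / bif_g n mu b by rewrite ltr_ndivlMr; lra.
rewrite /bif_f; lra.
Qed.

Lemma bif_f_ltN1 (b : R) : 0 < bif_g n mu b -> bif_f n mu b < -1.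
Proof. by move=> g_gt0; rewrite /bif_f gtrBl divr_gt0. Qed.

Hypothesis n_gt0 : (0 < n)%N.

Lemma bif_g_decr (b c : R) : b < c ->
    (forall j, (1 <= j <= n)%N -> mu j < 0 /\ 0 < (mu j - b) * (mu j - c)) ->
  bif_g n mu c < bif_g n mu b.
Proof.
move=> lt_bc mu_side; rewrite !bif_gE ltrD2l.
apply: ltr_sum_nat => // j j_range.
by have [? ?] := mu_side j j_range; exact: lt_div_sub.
Qed.

Lemma bif_g_inj_on (A : set R) :
    (forall b c, A b -> A c -> b < c -> forall j, (1 <= j <= n)%N ->
       mu j < 0 /\ 0 < (mu j - b) * (mu j - c)) ->
  forall b c, A b -> A c -> bif_g n mu b = bif_g n mu c -> b = c.
Proof.
move=> mu_side b c Ab Ac g_eq.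
by case: (ltgtP b c) => [lt_bc|lt_cb|//];
  [have := bif_g_decr _ _ lt_bc (mu_side _ _ Ab Ac lt_bc)
  |have := bif_g_decr _ _ lt_cb (mu_side _ _ Ac Ab lt_cb)]; rewrite g_eq ltxx.
Qed.

Lemma bif_g_lt (b : R) : (forall j, (1 <= j <= n)%N -> b < mu j < 0) ->
  bif_g n mu b < 1 - n%:R.
Proof.
move=> mu_gt; rewrite bif_gE ltrD2l.
have -> : - n%:R = \sum_(1 <= j < n.+1) (-1 : R) by rewrite sumr_const_nat subn1 mulNrn.
apply: ltr_sum_nat => // j j_range.
have /andP [lt_bj muj_lt0] := mu_gt j j_range.
by rewrite ltr_pdivrMr ?subr_gt0 //; lra.
Qed.

End BifurcationFunctions.

Theorem lemma3p4 (R : realType) (n : nat) (mu : nat -> R) (lam : nat -> R)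
    (bbar : R)
    (hn : (3 <= n)%N)
    (hmu_sorted : forall i j : nat, (1 <= i)%N -> (i <= j)%N -> (j <= n)%N ->
       mu i <= mu j)
    (hmu_neg : mu n < 0)
    (hlam1 : lam 1%N = -1)
    (hlam_incr : forall k : nat, (1 <= k)%N -> lam k < lam k.+1)
    (hlam_inf : lam @ \oo --> +oo)
    (hbbar_gt : mu n < bbar)
    (hbbar_zero : bif_g n mu bbar = 0)
    (hbbar_uniq : forall b : R, mu n < b -> bif_g n mu b = 0 -> b = bbar) :
  finite_set [set b : R | (b < mu 1%N \/ (mu n < b /\ b < bbar)) /\
                          exists k : nat, (1 <= k)%N /\ bif_f n mu b = lam k].
Proof.
have n_gt0 : (0 < n)%N by apply: leq_trans hn.
have n_large : 1 - n%:R <= -2 :> R.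
  have : 3 <= n%:R :> R by rewrite ler_nat.
  lra.
have mu_range j : (1 <= j <= n)%N -> mu 1%N <= mu j /\ mu j <= mu n.
  by case/andP => j_ge1 j_len; split; apply: hmu_sorted.
have lam_ge k : (1 <= k)%N -> -1 <= lam k.
  by rewrite -hlam1; apply: ge_seq_first => ? ?; exact/ltW/hlam_incr.
have [N _ lam_ge0] : \forall k \near \oo, 0 <= lam k by exact: (cvgryPge lam).1.
pose crossing k := [set b : R | b < mu 1%N /\ bif_f n mu b = lam k].
apply: (sub_finite_set (B := \bigcup_(k in `I_N) crossing k)); last first.
  apply: bigcup_finite => [|k _]; first exact: finite_II.
  apply: finite_subset1 => b c [lt_b1 fb] [lt_c1 fc].
  have /bif_f_inj_g g_eq : bif_f n mu b = bif_f n mu c by rewrite fb fc.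
  apply: (bif_g_inj_on n_gt0 [set x | x < mu 1%N]) g_eq => //.
  move=> x y _ /= lt_y1 lt_xy j /mu_range [ge_mu1 le_mun].
  by split; [lra | apply: mulr_gt0; lra].
move=> b [[lt_b1|[gt_bn lt_bbar]] [k [k_ge1 fb]]]; last first.
  have g_gt0 : 0 < bif_g n mu b.
    rewrite -hbbar_zero; apply: bif_g_decr => // j /mu_range [_ le_mun].
    by split; [lra | rewrite -mulrNN; apply: mulr_gt0; lra].
  by have := lam_ge k k_ge1; have := bif_f_ltN1 _ g_gt0; rewrite fb; lra.
have f_lt0 : bif_f n mu b < 0.
  have g_lt : bif_g n mu b < 1 - n%:R.
    apply: bif_g_lt => // j /mu_range [ge_mu1 le_mun].
    by apply/andP; split; lra.
  exact/bif_f_lt0/(lt_le_trans g_lt).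
exists k => //=; rewrite ltnNge; apply/negP => /lam_ge0 /=; rewrite -fb; lra.
Qed.
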